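(* Let $\mathbf G=(G,\le,\cdot,/,0,1)$ be a left-residuated po-groupoid whose multiplication is commutative ($x\cdot y=y\cdot x$ for all $x,y$). Then $\mathbf G$ satisfies $x\cdot y=\neg(\neg x/y)$ for all $x,y\in G$ if and only if it satisfies the contraposition law $x/y=\neg y/\neg x$ for all $x,y\in G$.
   Context: A (bounded integral) left-residuated po-groupoid is a structure $\mathbf G=(G,\le,\cdot,/,0,1)$ where $(G,\le,0,1)$ is a bounded poset with least element $0$ and greatest element $1$, $\cdot$ is a binary operation on $G$ with $1\cdot x=x\cdot 1=x$ for all $x$, and $/$ is a binary operation on $G$ satisfying the left residuation law: for all $x,y,z\in G$, $x\cdot y\le z\iff x\le z/y$. The negation is $\neg x:=0/x$. *)

Set Implicit Arguments.

Record LRPoGroupoid := {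
  carrier :> Type;
  le : carrier -> carrier -> Prop;
  mul : carrier -> carrier -> carrier;
  rdiv : carrier -> carrier -> carrier;
  zero : carrier;
  one : carrier;
  le_refl : forall x, le x x;
  le_antisym : forall x y, le x y -> le y x -> x = y;
  le_trans : forall x y z, le x y -> le y z -> le x z;
  zero_least : forall x, le zero x;
  one_greatest : forall x, le x one;
  mul_one_l : forall x, mul one x = x;
  mul_one_r : forall x, mul x one = x;
  residuation : forall x y z, le (mul x y) z <-> le x (rdiv z y)
}.

Definition neg (G : LRPoGroupoid) (x : G) : G := rdiv G (zero G) x.

(* Commutativity makes [x <= z / y] symmetric in [x] and [y]. Either law forces
   [neg] to be an involution (take [x = 1] in the product law, [y = 1] in the
   contraposition law), and under that involution both laws are equivalent to
   [neg (x * y) = neg x / y]: the product law by applying [neg] to both sides,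
   the contraposition law by a chain of residuations. *)
From Stdlib Require Import Setoid.

Set Implicit Arguments.
Unset Strict Implicit.

Section LRPoGroupoidFacts.
Variable G : LRPoGroupoid.

Lemma le_ext (u v : G) : (forall a, le G a u <-> le G a v) -> u = v.
Proof. intro H; apply le_antisym; [apply H | apply <- H]; apply le_refl. Qed.

Lemma rdiv_one (x : G) : rdiv G x (one G) = x.
Proof.
  apply le_ext; intro a; rewrite <- residuation, mul_one_r; reflexivity.
Qed.

Lemma neg_one : neg G (one G) = zero G.
Proof. apply rdiv_one. Qed.

Lemma neg_involutive_of_product_law :
  (forall x y : G, mul G x y = neg G (rdiv G (neg G x) y)) ->
  forall x : G, neg G (neg G x) = x.
Proof.
  intros prod x; rewrite <- (mul_one_l G x) at 2.
  rewrite prod, neg_one; reflexivity.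
Qed.

Lemma neg_involutive_of_contraposition :
  (forall x y : G, rdiv G x y = rdiv G (neg G y) (neg G x)) ->
  forall x : G, neg G (neg G x) = x.
Proof.
  intros contra x; rewrite <- (rdiv_one x) at 2.
  rewrite contra, neg_one; reflexivity.
Qed.

Lemma neg_mul_of_product_law :
  (forall x y : G, mul G x y = neg G (rdiv G (neg G x) y)) ->
  forall x y : G, neg G (mul G x y) = rdiv G (neg G x) y.
Proof.
  intros prod x y; rewrite prod, (neg_involutive_of_product_law prod); reflexivity.
Qed.

Section Commutative.
Hypothesis mulC : forall x y : G, mul G x y = mul G y x.

Lemma le_rdiv_swap (x y z : G) : le G x (rdiv G z y) <-> le G y (rdiv G z x).
Proof. rewrite <- !residuation, mulC; reflexivity. Qed.

Lemma le_neg_swap (a b : G) : le G a (neg G b) <-> le G b (neg G a).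
Proof. apply le_rdiv_swap. Qed.

Lemma neg_mul_of_contraposition :
  (forall x y : G, rdiv G x y = rdiv G (neg G y) (neg G x)) ->
  forall x y : G, neg G (mul G x y) = rdiv G (neg G x) y.
Proof.
  intros contra x y.
  pose proof (neg_involutive_of_contraposition contra) as negK.
  assert (swap : forall u v : G, rdiv G (neg G u) v = rdiv G (neg G v) u).
  { intros u v; rewrite contra, negK; reflexivity. }
  apply le_ext; intro a.
  rewrite le_neg_swap, residuation, swap, le_rdiv_swap, swap.
  reflexivity.
Qed.

End Commutative.
End LRPoGroupoidFacts.

Theorem mainTheorem10 (G : LRPoGroupoid)
  (Hcomm : forall x y : G, mul G x y = mul G y x) :
  (forall x y : G, mul G x y = neg G (rdiv G (neg G x) y)) <->
  (forall x y : G, rdiv G x y = rdiv G (neg G y) (neg G x)).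
Proof.
  split; intros law x y.
  - pose proof (neg_involutive_of_product_law law) as negK.
    rewrite <- (negK x) at 1.
    rewrite <- !(neg_mul_of_product_law law), Hcomm; reflexivity.
  - pose proof (neg_involutive_of_contraposition law) as negK.
    rewrite <- (neg_mul_of_contraposition Hcomm law), negK; reflexivity.
Qed.
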